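(* (i) For all $x\in[-0.5,0.5]$, $|E_4(x+0.65i)|<5.9$. (ii) For all $x\in[-0.5,0.5]$, $|E_4(x+0.75i)|<3.45$.
   Context: $q=e^{2\pi i\tau}$ for $\tau$ in the upper half plane, and $E_4(\tau)=1+240\sum_{n\ge1}\sigma_3(n)q^n$ with $\sigma_3(n)=\sum_{d\mid n}d^3$. *)

From Stdlib Require Import Reals Lra Arith.
From Coquelicot Require Import Coquelicot.
Open Scope R_scope.

(* sigma_3(n) = sum of d^3 over divisors d of n (sigma3 0 = 0, unused). *)
Fixpoint sum_div3 (n d : nat) : nat :=
  match d with
  | O => O
  | S d' => (if Nat.eqb (n mod (S d')) 0 then (S d') ^ 3 else 0)%nat + sum_div3 n d'
  end.
Definition sigma3 (n : nat) : nat := sum_div3 n n.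

Definition cexp (z : C) : C := (exp (fst z) * cos (snd z), exp (fst z) * sin (snd z)).

Definition qnome (tau : C) : C := cexp (Cmult (RtoC (2 * PI)) (Cmult Ci tau)).

(* n-th term sigma_3(n) q^n (the n = 0 term is 0 since sigma3 0 = 0). *)
Definition E4_term (tau : C) (n : nat) : C :=
  Cmult (RtoC (INR (sigma3 n))) (pow_n (qnome tau) n).

(* E_4(tau) = 1 + 240 * sum_{n>=1} sigma_3(n) q^n; the complex series is summed
   componentwise (real and imaginary parts). *)
Definition E4 (tau : C) : C :=
  Cplus (RtoC 1)
    (Cmult (RtoC 240)
       (Series (fun n => fst (E4_term tau n)), Series (fun n => snd (E4_term tau n)))).

From Stdlib Require Import Reals Lra Lia Arith.
From Coquelicot Require Import Coquelicot.
Open Scope R_scope.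

(** We have |q| = exp(-2 pi Im tau) and sigma_3(n) <= n^4 <= 5^n.  Keeping the
    terms n = 1, 2 exactly and dominating the tail by a geometric series gives
    |E_4(tau)| <= 1 + 240 (r + 9 r^2 + (5r)^3 / (1 - 5r)) with r = |q| < 1/5.
    Since exp(4.08) >= 59 and exp(4.7) >= 109, while 2 pi 0.65 > 4.08 and
    2 pi 0.75 > 4.7, we get r <= 1/59 resp. r <= 1/109 on the two lines, and the
    bound evaluates to about 5.85 resp. 3.41. *)

Lemma INR_fact_succ n : INR (fact (S n)) = INR (S n) * INR (fact n).
Proof. now rewrite fact_simpl, mult_INR. Qed.

Lemma PI_gt_31415 : 31415/10000 < PI.
Proof.
enough (31415/20000 < PI/2) by lra.
apply PI2_lower_bound; [lra|].
eapply Rlt_le_trans; [|apply (pre_cos_bound _ 3); lra].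
unfold cos_approx, cos_term; cbn [sum_f_R0 Nat.mul Nat.add].
rewrite !INR_fact_succ; cbn [fact INR]; lra.
Qed.

Lemma exp_ge_Taylor x N : 0 <= x ->
  sum_f_R0 (fun k => / INR (fact k) * x ^ k) N <= exp x.
Proof.
intros Hx; apply sum_incr; [exact (proj2_sig (exist_exp x))|].
intros k; apply Rmult_le_pos; [|now apply pow_le].
apply Rlt_le, Rinv_0_lt_compat, INR_fact_lt_0.
Qed.

Lemma exp_408_ge_59 : 59 <= exp (408/100).
Proof.
eapply Rle_trans; [|apply (exp_ge_Taylor _ 15); lra].
cbn [sum_f_R0]; rewrite !INR_fact_succ; cbn [fact INR]; lra.
Qed.

Lemma exp_47_ge_109 : 109 <= exp (47/10).
Proof.
eapply Rle_trans; [|apply (exp_ge_Taylor _ 15); lra].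
cbn [sum_f_R0]; rewrite !INR_fact_succ; cbn [fact INR]; lra.
Qed.

Lemma sum_div3_le n d : (sum_div3 n d <= d ^ 4)%nat.
Proof.
induction d as [|d IH]; cbn [sum_div3]; [lia|].
assert (Hterm : ((if Nat.eqb (n mod S d) 0 then S d ^ 3 else 0) <= S d ^ 3)%nat)
  by (destruct Nat.eqb; lia).
assert (Hcube : (d ^ 3 <= S d ^ 3)%nat) by (apply Nat.pow_le_mono_l; lia).
rewrite (Nat.pow_succ_r' (S d) 3), (Nat.pow_succ_r' d 3) in *.
nia.
Qed.

Lemma pow4_le_pow5 n : (n ^ 4 <= 5 ^ n)%nat.
Proof.
induction n as [|n IH]; [cbn; lia|].
destruct (Nat.le_gt_cases 3 n) as [Hn|Hn].
- assert (H34 : ((3 * S n) ^ 4 <= (4 * n) ^ 4)%nat) by (apply Nat.pow_le_mono_l; lia).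
  rewrite !Nat.pow_mul_l in H34; rewrite (Nat.pow_succ_r' 5 n).
  change (3 ^ 4)%nat with 81%nat in H34; change (4 ^ 4)%nat with 256%nat in H34.
  revert IH H34; generalize (S n ^ 4)%nat (n ^ 4)%nat (5 ^ n)%nat; lia.
- destruct n as [|[|[|n]]]; cbn; lia.
Qed.

Lemma sigma3_le_pow5 n : INR (sigma3 n) <= 5 ^ n.
Proof.
replace 5 with (INR 5) by (cbn; lra).
rewrite <- pow_INR; apply le_INR.
eapply Nat.le_trans; [apply sum_div3_le|apply pow4_le_pow5].
Qed.

Lemma Cmod_qnome x y : Cmod (qnome (x, y)) = exp (- (2 * PI * y)).
Proof.
unfold Cmod, qnome, cexp, RtoC, Ci, Cmult; cbn [fst snd].
set (th := 2 * PI * (0 * y + 1 * x) + 0 * (0 * x - 1 * y)).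
set (e := exp _).
assert (He : 0 < e) by apply exp_pos.
replace ((e * cos th) ^ 2 + (e * sin th) ^ 2) with (e ^ 2).
- rewrite sqrt_pow2 by lra; unfold e; f_equal; ring.
- rewrite <- (Rmult_1_r (e ^ 2)), <- (sin2_cos2 th); unfold Rsqr; ring.
Qed.

Lemma Cmod_pow_n (z : C) n : Cmod (pow_n z n) = Cmod z ^ n.
Proof.
induction n as [|n IH]; [apply Cmod_1|].
change (Cmod (z * pow_n z n) = Cmod z * Cmod z ^ n).
now rewrite Cmod_mult, IH.
Qed.

Lemma Cmod_E4_term tau n :
  Cmod (E4_term tau n) = INR (sigma3 n) * Cmod (qnome tau) ^ n.
Proof.
unfold E4_term; rewrite Cmod_mult, Cmod_R, Cmod_pow_n, Rabs_pos_eq; [|apply pos_INR].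
reflexivity.
Qed.

Lemma Cmod_E4_term_le tau n : Cmod (E4_term tau n) <= (5 * Cmod (qnome tau)) ^ n.
Proof.
rewrite Cmod_E4_term, Rpow_mult_distr.
apply Rmult_le_compat_r; [apply pow_le, Cmod_ge_0|apply sigma3_le_pow5].
Qed.

Lemma Series_le_ex (a b : nat -> R) :
  (forall n, a n <= b n) -> ex_series a -> ex_series b -> Series a <= Series b.
Proof.
intros Hab Ha Hb.
apply (is_lim_seq_le (sum_n a) (sum_n b) (Series a) (Series b)).
- intros n; now apply sum_n_m_le.
- now apply Series_correct.
- now apply Series_correct.
Qed.

Lemma Cmod_Cauchy_Schwarz (A B : R) (z : C) : A * fst z + B * snd z <= Cmod (A, B) * Cmod z.
Proof.
destruct z as [p q]; unfold Cmod; cbn [fst snd].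
replace (A ^ 2 + B ^ 2) with (Rsqr A + Rsqr B) by (unfold Rsqr; ring).
replace (p ^ 2 + q ^ 2) with (Rsqr p + Rsqr q) by (unfold Rsqr; ring).
apply sqrt_cauchy.
Qed.

Lemma Cmod_Series_le (a : nat -> C) : ex_series (fun n => Cmod (a n)) ->
  Cmod (Series (fun n => fst (a n)), Series (fun n => snd (a n)))
  <= Series (fun n => Cmod (a n)).
Proof.
intros Hb.
set (u := fun n => fst (a n)); set (v := fun n => snd (a n)).
set (b := fun n => Cmod (a n)).
assert (Hu : ex_series u).
{ apply (ex_series_le u b); [|exact Hb]; intros n.
  eapply Rle_trans; [apply Rmax_l|apply Rmax_Cmod]. }
assert (Hv : ex_series v).
{ apply (ex_series_le v b); [|exact Hb]; intros n.
  eapply Rle_trans; [apply Rmax_r|apply Rmax_Cmod]. }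
set (A := Series u); set (B := Series v); set (M := Cmod (A, B)).
assert (HM0 : 0 <= M) by apply Cmod_ge_0.
assert (HMM : M * M = A * A + B * B).
{ unfold M, Cmod; cbn [fst snd]; rewrite sqrt_sqrt; [ring|nra]. }
assert (HAu : ex_series (fun n => A * u n)) by exact (ex_series_scal_l A u Hu).
assert (HBv : ex_series (fun n => B * v n)) by exact (ex_series_scal_l B v Hv).
(* the series of A u_n + B v_n has sum A^2 + B^2 = M^2 and is dominated by M b_n *)
assert (HAB : A * A + B * B <= M * Series b).
{ rewrite <- Series_scal_l.
  replace (A * A + B * B) with (Series (fun n => A * u n + B * v n))
    by now rewrite Series_plus, !Series_scal_l.
  apply Series_le_ex.
  - intros n; apply Cmod_Cauchy_Schwarz.
  - exact (ex_series_plus _ _ HAu HBv).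
  - exact (ex_series_scal_l M b Hb). }
assert (Hsum0 : 0 <= Series b).
{ rewrite <- (Rmult_0_l (Series b)), <- Series_scal_l.
  apply Series_le; [|exact Hb]; intros n; rewrite Rmult_0_l.
  split; [lra|apply Cmod_ge_0]. }
destruct (Req_dec M 0) as [Hz|Hz]; [lra|nra].
Qed.

Definition E4_majorant (r : R) : R := r + 9 * r ^ 2 + (5 * r) ^ 3 / (1 - 5 * r).

Lemma E4_majorant_le_compat r s : 0 <= r <= s -> 5 * s < 1 ->
  E4_majorant r <= E4_majorant s.
Proof.
intros Hrs Hs; unfold E4_majorant, Rdiv.
assert (r ^ 2 <= s ^ 2) by (apply pow_incr; lra).
assert ((5 * r) ^ 3 <= (5 * s) ^ 3) by (apply pow_incr; lra).
assert (/ (1 - 5 * r) <= / (1 - 5 * s)) by (apply Rinv_le_contravar; lra).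
assert (0 <= (5 * r) ^ 3) by (apply pow_le; lra).
assert (0 <= / (1 - 5 * r)) by (apply Rlt_le, Rinv_0_lt_compat; lra).
assert ((5 * r) ^ 3 * / (1 - 5 * r) <= (5 * s) ^ 3 * / (1 - 5 * s))
  by (apply Rmult_le_compat; lra).
lra.
Qed.

Section E4_estimate.

Variable tau : C.
Let r := Cmod (qnome tau).
Hypothesis r_small : 5 * r < 1.
Let r_ge0 : 0 <= r := Cmod_ge_0 _.

Lemma ex_series_Cmod_E4_term : ex_series (fun n => Cmod (E4_term tau n)).
Proof.
apply (ex_series_le (fun n => Cmod (E4_term tau n)) (fun n => (5 * r) ^ n)).
- intros n; change (Rabs (Cmod (E4_term tau n)) <= (5 * r) ^ n).
  rewrite Rabs_pos_eq by apply Cmod_ge_0; apply Cmod_E4_term_le.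
- apply ex_series_geom; rewrite Rabs_pos_eq; lra.
Qed.

Lemma Series_Cmod_E4_term_le : Series (fun n => Cmod (E4_term tau n)) <= E4_majorant r.
Proof.
rewrite (Series_incr_n _ 3) by (lia || apply ex_series_Cmod_E4_term).
cbn [pred sum_f_R0]; rewrite !Cmod_E4_term.
change (sigma3 0) with 0%nat; change (sigma3 1) with 1%nat; change (sigma3 2) with 9%nat.
fold r; cbn [INR].
assert (Htail : Series (fun k => Cmod (E4_term tau (3 + k))) <= (5 * r) ^ 3 / (1 - 5 * r)).
{ unfold Rdiv; rewrite <- (Series_geom (5 * r)), <- Series_scal_l
    by (rewrite Rabs_pos_eq; lra).
  apply Series_le.
  - intros k; split; [apply Cmod_ge_0|].
    rewrite <- pow_add; apply Cmod_E4_term_le.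
  - apply (ex_series_scal_l _ (fun n => (5 * r) ^ n)), ex_series_geom.
    rewrite Rabs_pos_eq; lra. }
unfold E4_majorant; lra.
Qed.

Lemma Cmod_E4_le : Cmod (E4 tau) <= 1 + 240 * E4_majorant r.
Proof.
unfold E4; eapply Rle_trans; [apply Cmod_triangle|].
rewrite Cmod_mult, !Cmod_R, Rabs_R1, (Rabs_pos_eq 240) by lra.
pose proof (Cmod_Series_le _ ex_series_Cmod_E4_term).
pose proof Series_Cmod_E4_term_le.
lra.
Qed.

End E4_estimate.

Lemma Cmod_E4_lt x y t L K : L <= exp t -> t < 2 * PI * y -> 5 < L ->
  1 + 240 * E4_majorant (/ L) < K -> Cmod (E4 (x, y)) < K.
Proof.
intros HL Ht HL5 HK.
assert (Hq : Cmod (qnome (x, y)) <= / L).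
{ rewrite Cmod_qnome, exp_Ropp; apply Rinv_le_contravar; [lra|].
  apply (Rle_trans _ _ _ HL), Rlt_le, exp_increasing; lra. }
assert (HL1 : 5 * / L < 1).
{ apply (Rmult_lt_reg_r L); [lra|]; rewrite Rmult_assoc, Rinv_l; lra. }
assert (Hmaj := E4_majorant_le_compat _ _ (conj (Cmod_ge_0 _) Hq) HL1).
assert (HE := Cmod_E4_le (x, y) ltac:(lra)).
lra.
Qed.

Theorem lemma4p7 :
  (forall x : R, -(1/2) <= x <= 1/2 -> Cmod (E4 (x, 13/20)) < 59/10) /\
  (forall x : R, -(1/2) <= x <= 1/2 -> Cmod (E4 (x, 3/4)) < 69/20).
Proof.
pose proof PI_gt_31415.
split; intros x _.
- apply (Cmod_E4_lt x _ (408/100) 59); [apply exp_408_ge_59|lra|lra|].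
  unfold E4_majorant; lra.
- apply (Cmod_E4_lt x _ (47/10) 109); [apply exp_47_ge_109|lra|lra|].
  unfold E4_majorant; lra.
Qed.
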